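(* Let $(\varphi,\mathcal A,V)$ be a linear system with $V\neq\{0\}$. If $\ker\varphi$ contains a nonzero left ideal of $\mathcal A$, then the universal dilation of $(\varphi,\mathcal A,V)$ is not equivalent to its principle (canonical) dilation.
   Context: Fix a field $\mathbb F$; all algebras and vector spaces are over $\mathbb F$, and $L(X)$ is the algebra of linear maps $X\to X$. A linear system $(\varphi,\mathcal A,V)$: $\mathcal A$ a unital associative algebra with unit $I$, $V$ a vector space, $\varphi:\mathcal A\to L(V)$ linear with $\varphi(I)=\mathrm{id}_V$. A homomorphism dilation system $(\pi,S,T,W)$: $W$ a vector space, $\pi:\mathcal A\to L(W)$ a unital homomorphism, $T:V\to W$ injective linear, $S:W\to V$ surjective linear, $\varphi(a)=S\pi(a)T$ for all $a$. Two linearly minimal systems (i.e. with $W=\mathrm{span}\{\pi(a)Tv\}$) are equivalent if there is a bijective linear $R:W_1\to W_2$ with $RT_1=T_2$, $S_2R=S_1$, $\pi_1(a)=R^{-1}\pi_2(a)R$ for all $a$. The universal dilation is $(\pi_u,S_u,T_u,\mathcal A\otimes V)$ with $\pi_u(a)(b\otimes x)=(ab)\otimes x$, $T_ux=I\otimes x$, $S_u(a\otimes x)=\varphi(a)x$. Canonical dilation: $\alpha_{a,x}\in L(\mathcal A,V)$, $\alpha_{a,x}(b)=\varphi(ba)x$; $W_c=\mathrm{span}\{\alpha_{a,x}\}$; $\pi_c(a)\alpha_{b,x}=\alpha_{ab,x}$; $T_cx=\alpha_{I,x}$; $S_c(\alpha_{a,x})=\varphi(a)x$. *)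

From HB Require Import structures.
From mathcomp Require Import all_boot all_order all_algebra.
Set Implicit Arguments. Unset Strict Implicit. Unset Printing Implicit Defensive.
Import GRing.Theory.
Local Open Scope ring_scope.

Section Defs.
Variable F : fieldType.

Definition linear_system (A : algType F) (V : lmodType F) (phi : A -> V -> V) : Prop :=
  [/\ forall a : A, linear (phi a),
      forall x : V, linear (fun a : A => phi a x)
    & forall x : V, phi 1 x = x].

Definition is_left_ideal (A : algType F) (J : A -> Prop) : Prop :=
  [/\ J 0,
      forall (k : F) (u v : A), J u -> J v -> J (k *: u + v)
    & forall (a j : A), J j -> J (a * j)].

Definition ker_contains_nonzero_left_ideal (A : algType F) (V : lmodType F)
    (phi : A -> V -> V) : Prop :=
  exists J : A -> Prop,
    [/\ is_left_ideal J,
        (exists j : A, J j /\ j <> 0)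
      & forall j : A, J j -> forall x : V, phi j x = 0].

Definition bilinear_map (A : algType F) (V W : lmodType F) (B : A -> V -> W) : Prop :=
  (forall x : V, linear (fun a : A => B a x)) /\ (forall a : A, linear (B a)).

(* (W, tens) is a tensor product A (x)_F V, characterized by its universal
   property (determined up to unique isomorphism). *)
Definition is_tensor_product (A : algType F) (V W : lmodType F) (tens : A -> V -> W) : Prop :=
  bilinear_map tens /\
  forall (U : lmodType F) (B : A -> V -> U), bilinear_map B ->
    (exists f : W -> U, linear f /\ forall a x, f (tens a x) = B a x) /\
    (forall f g : W -> U, linear f -> linear g ->
       (forall a x, f (tens a x) = B a x) -> (forall a x, g (tens a x) = B a x) ->
       forall w, f w = g w).

Definition T_u (A : algType F) (V W : lmodType F) (tens : A -> V -> W) (x : V) : W :=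
  tens 1 x.

Definition universal_dilation (A : algType F) (V W : lmodType F) (phi : A -> V -> V)
    (tens : A -> V -> W) (pi_u : A -> W -> W) (S_u : W -> V) : Prop :=
  [/\ forall a : A, linear (pi_u a),
      forall (a b : A) (x : V), pi_u a (tens b x) = tens (a * b) x,
      linear S_u
    & forall (a : A) (x : V), S_u (tens a x) = phi a x].

Definition alpha (A : algType F) (V : lmodType F) (phi : A -> V -> V) (a : A) (x : V) : A -> V :=
  fun b => phi (b * a) x.

Definition in_Wc (A : algType F) (V : lmodType F) (phi : A -> V -> V) (f : A -> V) : Prop :=
  exists s : seq (F * A * V),
    forall b : A, f b = \sum_(t <- s) t.1.1 *: alpha phi t.1.2 t.2 b.

(* pi_c(a) alpha_{b,x} = alpha_{ab,x}; on W_c this is f |-> (c |-> f (c a)). *)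
Definition pi_c (A : algType F) (V : lmodType F) (a : A) (f : A -> V) : A -> V :=
  fun c => f (c * a).

Definition T_c (A : algType F) (V : lmodType F) (phi : A -> V -> V) (x : V) : A -> V :=
  alpha phi 1 x.

(* S_c(alpha_{a,x}) = phi(a) x = alpha_{a,x}(I); on W_c this is f |-> f(I). *)
Definition S_c (A : algType F) (V : lmodType F) (f : A -> V) : V := f 1.

Definition linear_to_fun (A : algType F) (V W : lmodType F) (R : W -> A -> V) : Prop :=
  forall (k : F) (w w' : W) (c : A), R (k *: w + w') c = k *: R w c + R w' c.

(* Equivalence of the universal dilation with the canonical one: a bijective
   linear R : A (x) V -> W_c with R T_u = T_c, S_c R = S_u and
   pi_u(a) = R^{-1} pi_c(a) R (i.e. R pi_u(a) = pi_c(a) R). Elements of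
   W_c are functions A -> V, compared pointwise. *)
Definition equivalent_to_canonical (A : algType F) (V W : lmodType F) (phi : A -> V -> V)
    (tens : A -> V -> W) (pi_u : A -> W -> W) (S_u : W -> V) : Prop :=
  exists R : W -> A -> V,
    [/\ linear_to_fun R,
        (forall w : W, in_Wc phi (R w)) /\
        (forall f : A -> V, in_Wc phi f -> exists w : W, R w =1 f),
        forall w w' : W, R w =1 R w' -> w = w',
        (forall x : V, R (T_u tens x) =1 T_c phi x) /\
        (forall w : W, S_c (R w) = S_u w)
      & forall (a : A) (w : W), R (pi_u a w) =1 pi_c a (R w)].

End Defs.

(* If R were an equivalence, then R (j (x) x) = pi_c(j) alpha_{I,x} is the map
   c |-> phi(c j) x, which vanishes because c j lies in the left ideal inside
   ker phi; injectivity of R gives j (x) x = 0.  But in a tensor product a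
   nonzero x has a functional f with f x = 1, and the bilinear map
   (a, y) |-> f(y) a factors through (x), so a (x) x = 0 forces a = 0. *)

From HB Require Import structures.
From mathcomp Require Import all_boot all_order all_algebra.
From mathcomp Require Import classical_sets boolp.
Set Implicit Arguments. Unset Strict Implicit.
Import GRing.Theory.
Local Open Scope ring_scope.
Local Open Scope classical_set_scope.

(* The functional is the coordinate of x in V = H (+) F x, where H is a maximal
   subspace missing x (Zorn's lemma). *)
Section LinearFunctional.
Variables (F : fieldType) (V : lmodType F) (x : V).
Hypothesis x_neq0 : x != 0.

Definition lin_closed (M : set V) : Prop :=
  forall k u v, M u -> M v -> M (k *: u + v).

Definition avoids_x (M : set V) : Prop := lin_closed M /\ ~ M x.

Lemma exists_maximal_avoids_x :
  exists H, avoids_x H /\ forall B, H `<` B -> ~ avoids_x B.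
Proof.
apply: Zorn_bigcup => Fam Fam_avoids Fam_total; split.
  move=> k u v [X FX Xu] [Y FY Yv].
  have [XY|YX] := Fam_total X Y FX FY.
    by exists Y => //; apply: (Fam_avoids Y FY).1 => //; apply: XY.
  by exists X => //; apply: (Fam_avoids X FX).1 => //; apply: YX.
by move=> [X FX Xx]; exact: (Fam_avoids X FX).2 Xx.
Qed.

Variable H : set V.
Hypotheses (H_closed : lin_closed H) (H_x : ~ H x).
Hypothesis H_max : forall B, H `<` B -> ~ avoids_x B.

Lemma maximal_avoids_x_0 : H 0.
Proof.
have [[u Hu]|H_empty] := pselect (exists u, H u).
  by have := H_closed (-1) Hu Hu; rewrite scaleN1r addNr.
exfalso; apply: (@H_max [set 0]).
  split; first by move=> u Hu; exfalso; apply: H_empty; exists u.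
  by move=> /(_ 0 erefl) H0; apply: H_empty; exists 0.
split; first by move=> k u v -> ->; rewrite scaler0 addr0.
by move=> /= x0; move: x_neq0; rewrite x0 eqxx.
Qed.

(* H + F x is strictly larger than H and closed, so by maximality it contains x
   and hence all of V. *)
Lemma maximal_avoids_x_decomp v : exists t, H (v - t *: x).
Proof.
have [Hv|Hv] := pselect (H v); first by exists 0; rewrite scale0r subr0.
pose B := [set w | exists m s, H m /\ w = m + s *: v].
have H_ltB : H `<` B.
  split; first by move=> m Hm; exists m, 0; rewrite scale0r addr0.
  move=> /(_ v) BH; apply: Hv; apply: BH; exists 0, 1.
  by rewrite scale1r add0r; split; first exact: maximal_avoids_x_0.
have B_closed : lin_closed B.
  move=> k u w [m1 [s1 [Hm1 ->]]] [m2 [s2 [Hm2 ->]]].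
  exists (k *: m1 + m2), (k * s1 + s2); split; first exact: H_closed.
  by rewrite scalerDr scalerA scalerDl addrACA.
have [m [s [Hm xE]]] : B x.
  by apply: contrapT => Bx; exact: H_max H_ltB (conj B_closed Bx).
have s_neq0 : s != 0 by apply: contraPneq H_x => s0; rewrite xE s0 scale0r addr0.
exists s^-1; have -> : v - s^-1 *: x = (- s^-1) *: m + 0.
  rewrite xE scalerDr scalerA mulVf // scale1r addr0 opprD.
  by rewrite addrA addrC addrA addNr add0r scaleNr.
by apply: H_closed => //; exact: maximal_avoids_x_0.
Qed.

Lemma maximal_avoids_x_coef_uniq v t t' :
  H (v - t *: x) -> H (v - t' *: x) -> t = t'.
Proof.
move=> Ht Ht'; apply: contrapT => /eqP t_neq_t'; apply: H_x.
have := H_closed (t - t')^-1 (H_closed (-1) Ht Ht') maximal_avoids_x_0.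
rewrite addr0 scaleN1r opprB addrC addrA subrK -scalerBl scalerA.
by rewrite [- t' + t]addrC mulVf ?scale1r // subr_eq0.
Qed.

End LinearFunctional.

Lemma exists_linear_functional_one (F : fieldType) (V : lmodType F) (x : V) :
  x != 0 ->
  exists f : V -> F, (forall k u v, f (k *: u + v) = k * f u + f v) /\ f x = 1.
Proof.
move=> x_neq0.
have [H [[H_closed H_x] H_max]] := exists_maximal_avoids_x x.
have H0 := maximal_avoids_x_0 x_neq0 H_closed H_max.
have coef_uniq v t t' : H (v - t *: x) -> H (v - t' *: x) -> t = t'.
  exact: maximal_avoids_x_coef_uniq.
pose f v := sval (cid (maximal_avoids_x_decomp x_neq0 H_closed H_x H_max v)).
have fP v : H (v - f v *: x) by rewrite /f; case: cid.
exists f; split=> [k u v|]; last first.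
  by apply: (coef_uniq x); [exact: fP | rewrite scale1r subrr].
apply: (coef_uniq (k *: u + v)); first exact: fP.
have -> : k *: u + v - (k * f u + f v) *: x = k *: (u - f u *: x) + (v - f v *: x).
  by rewrite scalerDl -scalerA scalerBr opprD addrACA.
exact: H_closed _ (fP u) (fP v).
Qed.

Lemma lin_map0 (F : fieldType) (U X : lmodType F) (g : U -> X) :
  (forall k u v, g (k *: u + v) = k *: g u + g v) -> g 0 = 0.
Proof. by move=> g_lin; have := g_lin (-1) 0 0; rewrite scaler0 addr0 scaleN1r addNr. Qed.

Lemma tensor_product_eq0 (F : fieldType) (A : algType F) (V W : lmodType F)
    (tens : A -> V -> W) (a : A) (x : V) :
  is_tensor_product tens -> x != 0 -> tens a x = 0 -> a = 0.
Proof.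
move=> [_ tens_univ] x_neq0 tens_ax0.
have [f [f_lin fx1]] := exists_linear_functional_one x_neq0.
have scale_bilinear : bilinear_map (fun (b : A) (y : V) => f y *: b).
  split=> [y k b c | b k y z] /=; first by rewrite scalerDr scalerA mulrC -scalerA.
  by rewrite f_lin scalerDl scalerA.
have [[h [h_lin h_tens]] _] := tens_univ A _ scale_bilinear.
by rewrite -[a]scale1r -fx1 -h_tens tens_ax0; apply: lin_map0.
Qed.

Lemma equivalent_to_canonical_tens0 (F : fieldType) (A : algType F)
    (V W : lmodType F) (phi : A -> V -> V) (tens : A -> V -> W)
    (pi_u : A -> W -> W) (S_u : W -> V) (j : A) (x : V) :
  universal_dilation phi tens pi_u S_u ->
  equivalent_to_canonical phi tens pi_u S_u ->
  (forall c : A, phi (c * j) x = 0) -> tens j x = 0.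
Proof.
move=> [_ pi_u_tens _ _] [R [R_lin _ R_inj [R_T _] R_pi]] Aj_ker.
apply: R_inj => c; rewrite (lin_map0 (g := R^~ c)) => [|k w w']; last exact: R_lin.
rewrite -[j]mulr1 -pi_u_tens R_pi /pi_c.
by rewrite (R_T x (c * j)) /T_c /alpha mulr1.
Qed.

Theorem corollary4p2 (F : fieldType) (A : algType F) (V : lmodType F)
    (phi : A -> V -> V) (W : lmodType F) (tens : A -> V -> W)
    (pi_u : A -> W -> W) (S_u : W -> V) :
  linear_system phi ->
  (exists x : V, x != 0) ->
  ker_contains_nonzero_left_ideal phi ->
  is_tensor_product tens ->
  universal_dilation phi tens pi_u S_u ->
  ~ equivalent_to_canonical phi tens pi_u S_u.
Proof.
move=> _ [x x_neq0] [J [[_ _ J_left] [j [Jj j_neq0]] J_ker]] tensP univ equiv.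
apply: j_neq0; apply: (tensor_product_eq0 tensP x_neq0).
apply: (equivalent_to_canonical_tens0 univ equiv) => c.
exact/J_ker/J_left.
Qed.
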